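(* Let $p\in[1,\infty)$ and $\zeta\in M_p^{n-1}$. If $u_k,u\in\mathrm{Conv}_{\mathrm{coe}}^{(n)}(\mathbb{R}^n)$ are such that $\delta_{\zeta,p}(u_k,u)\to 0$, then $u_k(x_0)\to+\infty$ as $k\to\infty$ for every $x_0\in\mathrm{int}(\mathbb{R}^n\setminus\mathrm{dom}\,u)$.
   Context: $\mathrm{Conv}_{\mathrm{coe}}^{(n)}(\mathbb{R}^n)$ is the set of proper, lower semicontinuous, convex, coercive $u:\mathbb{R}^n\to\mathbb{R}\cup\{+\infty\}$ with $\mathrm{dom}\,u=\{u<+\infty\}$ of dimension $n$. $M_p^{n-1}$ is the set of continuous, strictly decreasing $\zeta:\mathbb{R}\to(0,\infty)$ with $\int_0^\infty\zeta(t)^pt^{n-1}dt<\infty$. $\delta_{\zeta,p}(u,v)=\left(\int_{\mathbb{R}^n}|\zeta(u(x))-\zeta(v(x))|^pdx\right)^{1/p}$ with $\zeta(+\infty):=0$. *)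

From HB Require Import structures.
From mathcomp Require Import all_boot all_order all_algebra.
From mathcomp Require Import all_classical all_reals all_analysis.
Set Implicit Arguments. Unset Strict Implicit. Unset Printing Implicit Defensive.
Import Order.TTheory GRing.Theory Num.Theory.
Import numFieldNormedType.Exports.
Local Open Scope classical_set_scope.
Local Open Scope ring_scope.

Section Defs.
Variable R : realType.
Local Open Scope ereal_scope.

Definition edom (n : nat) (u : 'rV[R]_n -> \bar R) : set 'rV[R]_n :=
  [set x | u x < +oo].

Definition conv_fun (n : nat) (u : 'rV[R]_n -> \bar R) : Prop :=
  forall (x y : 'rV[R]_n) (t : R), (0 <= t <= 1)%R ->
    u ((1 - t) *: x + t *: y)%R <= (1 - t)%R%:E * u x + t%:E * u y.

Definition proper_fun (n : nat) (u : 'rV[R]_n -> \bar R) : Prop :=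
  (forall x, u x != -oo) /\ (exists x, u x < +oo).

Definition coercive (n : nat) (u : 'rV[R]_n -> \bar R) : Prop :=
  forall M : R, exists r : R, forall x : 'rV[R]_n, (r < `|x|)%R -> M%:E < u x.

(* the affine hull of dom u has dimension n, i.e. dom u contains n+1
   affinely independent points x0, x0 + row i M (i < n) with M of rank n *)
Definition full_dim_dom (n : nat) (u : 'rV[R]_n -> \bar R) : Prop :=
  exists (x0 : 'rV[R]_n) (M : 'M[R]_n),
    edom u x0 /\ (forall i, edom u (x0 + row i M)%R) /\ \rank M = n.

Definition Conv_coe (n : nat) (u : 'rV[R]_n -> \bar R) : Prop :=
  [/\ proper_fun u, lower_semicontinuous u, conv_fun u, coercive u
    & full_dim_dom u].

Definition M_p (n : nat) (p : R) (zeta : R -> R) : Prop :=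
  [/\ continuous zeta,
      (forall s t : R, (s < t)%R -> (zeta t < zeta s)%R),
      (forall t : R, (0 < zeta t)%R)
    & \int[@lebesgue_measure R]_(t in `[0%R, +oo[)
          ((zeta t) `^ p * t ^+ n.-1)%:E < +oo].

Definition zeta_ext (zeta : R -> R) (y : \bar R) : R :=
  match y with EFin r => zeta r | _ => 0%R end.

(* Lebesgue integral over R^n of a nonnegative function, as an iterated
   integral (Tonelli) w.r.t. the one-dimensional Lebesgue measure *)
Fixpoint iint (n : nat) : ('rV[R]_n -> \bar R) -> \bar R :=
  match n with
  | 0 => fun f => f 0%R
  | m.+1 => fun f => \int[@lebesgue_measure R]_(t in [set: R])
                 iint (fun y : 'rV[R]_m => f (row_mx (\row_(_ < 1) t) y))
  end.

Definition delta (n : nat) (zeta : R -> R) (p : R)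
    (u v : 'rV[R]_n -> \bar R) : \bar R :=
  (iint (fun x => (`| zeta_ext zeta (u x) - zeta_ext zeta (v x) | `^ p)%:E))
    `^ (p^-1).

End Defs.

(* Fix a threshold M.  Since u is +oo on a cube around x0 and, having a
   full-dimensional domain, is bounded by some A on a cube Q, a convex v with
   v x0 <= M must be far from u in delta: either v > A + 1 on a subcube of Q of
   fixed size (where |zeta(v) - zeta(u)| >= zeta A - zeta (A + 1)), or, by
   convexity of the sublevel set {v <= A + 1}, v <= A + 1 on a cube of fixed
   size; then v <= max M (A + 1) on the homothetic image of that cube shrunk
   towards x0, which lies in the region u = +oo, where
   |zeta(v) - zeta(u)| >= zeta (max M (A + 1)).  Hence delta(u_k, u) -> 0
   forces u_k x0 > M eventually. *)

From HB Require Import structures.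
From mathcomp Require Import all_boot all_order all_algebra.
From mathcomp Require Import all_classical all_reals all_analysis.
From mathcomp Require Import ring lra.
Import Order.TTheory GRing.Theory Num.Theory.
Import numFieldNormedType.Exports.
Local Open Scope classical_set_scope.
Local Open Scope ring_scope.
Set Implicit Arguments. Unset Strict Implicit. Unset Printing Implicit Defensive.

Section Cubes.
Variable R : realType.
Implicit Types r s t : R.

Definition is_convex (V : lmodType R) (S : set V) : Prop :=
  forall x y t, 0 <= t <= 1 -> S x -> S y -> S ((1 - t) *: x + t *: y).

Definition cube n (z : 'rV[R]_n) r (x : 'rV[R]_n) : Prop :=
  forall j, `|x ord0 j - z ord0 j| <= r.

Lemma ler_sum_term (I : finType) (F : I -> R) j :
  (forall i, 0 <= F i) -> F j <= \sum_i F i.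
Proof. by move=> F0; rewrite (bigD1 j) //= lerDl sumr_ge0. Qed.

Lemma cube_le n (z x : 'rV[R]_n) r s : r <= s -> cube z r x -> cube z s x.
Proof. by move=> rs zx j; apply: le_trans rs. Qed.

Lemma cube_trans n (z c y : 'rV[R]_n) r s :
  cube z s c -> cube c r y -> cube z (s + r) y.
Proof.
by move=> zc cy j; rewrite (le_trans (ler_distD (c ord0 j) _ _)) // addrC lerD.
Qed.

Lemma cube_sum_dist n (z x : 'rV[R]_n) :
  cube z (\sum_j `|x ord0 j - z ord0 j|) x.
Proof. by move=> j; apply: ler_sum_term. Qed.

Lemma cube_row_mx m (a a' : 'rV[R]_1) (b b' : 'rV[R]_m) r :
  cube (row_mx a b) r (row_mx a' b') <-> `|a' 0 0 - a 0 0| <= r /\ cube b r b'.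
Proof.
split=> [H|[H1 H2] j].
  split; first by have := H (lshift m ord0); rewrite !row_mxEl.
  by move=> j; have := H (rshift 1 j); rewrite !row_mxEr.
rewrite -(splitK j); case: (fintype.split j) => k /=.
  by rewrite !row_mxEl (ord1 k).
by rewrite !row_mxEr.
Qed.

Lemma cube_convex n (c : 'rV[R]_n) r : 0 <= r -> is_convex (cube c r).
Proof.
move=> r0 x y t /andP[t0 t1] cx cy j; rewrite !mxE.
have -> : (1 - t) * x ord0 j + t * y ord0 j - c ord0 j =
  (1 - t) * (x ord0 j - c ord0 j) + t * (y ord0 j - c ord0 j) by ring.
apply: (le_trans (ler_normD _ _)).
rewrite !normrM (ger0_norm t0) ger0_norm ?subr_ge0 //.
have -> : r = (1 - t) * r + t * r by ring.
by apply: lerD; apply: ler_wpM2l => //; rewrite subr_ge0.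
Qed.

Lemma cube_mulmx m n (z y : 'rV[R]_m) (N : 'M[R]_(m, n)) r :
  cube z r y -> cube (z *m N) (r * \sum_i \sum_j `|N i j|) (y *m N).
Proof.
move=> zy j; rewrite !mxE -sumrB mulr_sumr.
apply: (le_trans (ler_norm_sum _ _ _)); apply: ler_sum => i _.
by rewrite -mulrBl normrM; apply: ler_pM => //; apply: ler_sum_term.
Qed.

Lemma interior_cube n (A : set 'rV[R]_n) x :
  interior A x -> exists2 e, 0 < e & forall y, cube x e y -> A y.
Proof.
move=> /nbhs_ballP [e e0 xA]; exists (e / 2); first by rewrite divr_gt0.
move=> y xy; apply: xA; split=> // i j; rewrite (ord1 i) /ball /= distrC.
by apply: (le_lt_trans (xy j)); rewrite ltr_pdivrMr // ltr_pMr // ltr1n.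
Qed.

Lemma is_convex_add_wsum (V : lmodType R) (S : set V) a (I : eqType) (s : seq I)
    (w : I -> R) (v : I -> V) :
  is_convex S -> S a -> (forall i, i \in s -> 0 <= w i /\ S (a + v i)) ->
  \sum_(i <- s) w i < 1 -> S (a + \sum_(i <- s) w i *: v i).
Proof.
move=> cS Sa; elim: s w => [|i s IH] w H; first by rewrite !big_nil addr0.
rewrite !big_cons => Hs.
have [wi0 Sv] := H i (mem_head _ _).
have W0 : 0 <= \sum_(j <- s) w j.
  rewrite big_seq sumr_ge0 // => j js.
  by have [] := H j (mem_behead (s := i :: s) js).
have wi1 : 0 < 1 - w i by lra.
have Ss : S (a + \sum_(j <- s) (w j / (1 - w i)) *: v j).
  apply: IH => [j js|]; last by rewrite -mulr_suml ltr_pdivrMr // mul1r; lra.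
  have [wj0 Svj] := H j (mem_behead (s := i :: s) js).
  by split=> //; rewrite divr_ge0 // ltW.
have wi01 : 0 <= w i <= 1 by apply/andP; split; lra.
have := cS _ _ _ wi01 Ss Sv; congr S.
rewrite scalerDr scaler_sumr.
under [X in _ + X + _ = _]eq_bigr => j _ do
  rewrite scalerA mulrCA divff ?mulr1 ?gt_eqF //.
by rewrite scalerDr scalerBl scale1r addrAC addrA addrNK -addrA.
Qed.

Lemma is_convex_simplex_cube n (S : set 'rV[R]_n) x0 (M : 'M[R]_n) :
  is_convex S -> S x0 -> (forall i, S (x0 + row i M)) -> \rank M = n ->
  exists z rho, 0 < rho /\ forall x, cube z rho x -> S x.
Proof.
move=> cS Sx0 SM rM.
have uM : M \in unitmx by rewrite -row_free_unit /row_free rM.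
pose c : R := (2 * n.+1%:R)^-1.
pose K : R := 1 + \sum_i \sum_j `|invmx M i j|.
have c0 : 0 < c by rewrite invr_gt0 mulr_gt0.
have K0 : 0 < K by rewrite ltr_pwDl // sumr_ge0 // => i _; rewrite sumr_ge0.
exists (x0 + const_mx c *m M), (c / K); split=> [|x zx]; first by rewrite divr_gt0.
pose w := (x - x0) *m invmx M.
(* The coordinates of x - x0 in the basis M lie in [0, 2c], and 2 c n < 1. *)
have cw : cube (const_mx c) c w.
  have : cube (const_mx c *m M) (c / K) (x - x0).
    by move=> j; have := zx j; rewrite !mxE opprD addrA.
  move=> /(cube_mulmx (invmx M)); rewrite mulmxK //; apply: cube_le.
  by rewrite -mulrA -[leRHS]mulr1 ler_pM2l // mulrC ler_pdivrMr // mul1r lerDr.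
have w_bounds i : 0 <= w ord0 i <= 2 * c.
  have := cw i; rewrite [const_mx c _ _]mxE ler_norml => /andP[? ?].
  by apply/andP; split; lra.
have -> : x = x0 + w *m M by rewrite mulmxKV // addrC subrK.
rewrite mulmx_sum_row; apply: is_convex_add_wsum => // [i _|].
  by have /andP[] := w_bounds i.
apply: (@le_lt_trans _ _ (\sum_(i < n) 2 * c)).
  by apply: ler_sum => i _; have /andP[] := w_bounds i.
rewrite sumr_const card_ord -[_ *+ n]mulr_natr /c invfM mulrA divff ?pnatr_eq0 //.
by rewrite mul1r mulrC ltr_pdivrMr // mul1r ltr_nat.
Qed.

Lemma is_convex_row_mx_between m (S : set 'rV[R]_(1 + m)) (l la lb : 'rV[R]_1)
    (ya yb : 'rV[R]_m) :
  is_convex S -> S (row_mx la ya) -> S (row_mx lb yb) ->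
  la 0 0 <= l 0 0 <= lb 0 0 -> la 0 0 < lb 0 0 ->
  exists2 s, 0 <= s <= 1 & S (row_mx l ((1 - s) *: ya + s *: yb)).
Proof.
move=> cS Sa Sb /andP[al lb'] ab.
pose s := (l 0 0 - la 0 0) / (lb 0 0 - la 0 0).
have s01 : 0 <= s <= 1.
  apply/andP; split; first by apply: divr_ge0; lra.
  by rewrite ler_pdivrMr ?subr_gt0 // mul1r; lra.
exists s => //.
have -> : l = (1 - s) *: la + s *: lb.
  apply/matrixP => i j; rewrite (ord1 i) (ord1 j) !mxE /s.
  by field; rewrite subr_eq0 gt_eqF.
by rewrite -add_row_mx -!scale_row_mx; apply: cS.
Qed.

Lemma is_convex_meets_cubes n (S : set 'rV[R]_n) z r : 0 < r -> is_convex S ->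
  (forall c, cube z (2 * r) c -> exists2 y, S y & cube c r y) ->
  forall x, cube z r x -> S x.
Proof.
move=> r0; elim: n S z => [|m IH] S z cS HS x.
  have [|y Sy _] := HS z; first by case.
  by rewrite (thinmx0 x) -(thinmx0 y).
move: z HS x; change (forall z : 'rV[R]_(1 + m),
  (forall c, cube z (2 * r) c -> exists2 y : 'rV_(1 + m), S y & cube c r y) ->
  forall x, cube z r x -> S x).
move=> z HS x; rewrite -[x]hsubmxK -[z]hsubmxK.
set l := lsubmx x; set a := lsubmx z => /cube_row_mx [al zx].
have cSl : is_convex (fun y => S (row_mx l y)).
  move=> y1 y2 s s01 S1 S2.
  have -> : row_mx l ((1 - s) *: y1 + s *: y2) =
      (1 - s) *: row_mx l y1 + s *: row_mx l y2 :> 'rV_(1 + m).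
    by rewrite !scale_row_mx add_row_mx -scalerDl subrK scale1r.
  exact: cS.
apply: (IH _ (rsubmx z) cSl) zx => c zc.
(* Near (a - 2r, c) and (a + 2r, c), S has points whose first coordinates
   straddle that of x; a convex combination of them lies on the slice. *)
have near_pt (d : R) : `|d| <= 2 * r -> exists (l' : 'rV_1) (y : 'rV_m),
    [/\ S (row_mx l' y), `|l' 0 0 - (a 0 0 + d)| <= r & cube c r y].
  move=> d2r; have [|y Sy] := HS (row_mx (\row_(_ < 1) (a 0 0 + d)) c).
    by rewrite -[z]hsubmxK; apply/cube_row_mx; rewrite mxE addrAC subrr add0r.
  rewrite -[y]hsubmxK => /cube_row_mx [yl yr].
  exists (lsubmx y), (rsubmx y); split => //; first by rewrite hsubmxK.
  by move: yl; rewrite [(\row__ _) 0 0]mxE.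
have [|lp [yp [Sp lpr cp]]] := near_pt (2 * r).
  by rewrite ger0_norm // mulr_ge0 // ltW.
have [|lm [ym [Sm lmr cm]]] := near_pt (- (2 * r)).
  by rewrite normrN ger0_norm // mulr_ge0 // ltW.
move: al lpr lmr; rewrite !ler_norml => /andP[? ?] /andP[? ?] /andP[? ?].
have lmlp : lm 0 0 <= l 0 0 <= lp 0 0 by apply/andP; split; lra.
have [|s s01 Ss] := is_convex_row_mx_between cS Sm Sp lmlp; first lra.
exists ((1 - s) *: ym + s *: yp) => //.
exact: cube_convex (ltW r0) _ _ _ s01 cm cp.
Qed.

Lemma is_convex_cube_dichotomy n (S : set 'rV[R]_n) z r : 0 < r -> is_convex S ->
  (exists2 c, cube z (2 * r) c & forall y, cube c r y -> ~ S y) \/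
  (forall y, cube z r y -> S y).
Proof.
move=> r0 cS; have [|noc] := pselect (exists2 c, cube z (2 * r) c &
  forall y, cube c r y -> ~ S y); first by left.
right; apply: is_convex_meets_cubes => // c zc; apply: contrapT => noy.
by apply: noc; exists c => // y cy Sy; apply: noy; exists y.
Qed.

Lemma is_convex_homothetic_cube n (S : set 'rV[R]_n) x0 z r t :
  is_convex S -> S x0 -> (forall y, cube z r y -> S y) -> 0 < t <= 1 ->
  forall x, cube (x0 + t *: (z - x0)) (t * r) x -> S x.
Proof.
move=> cS Sx0 Sz /andP[t0 t1] x hx.
have -> : x = (1 - t) *: x0 + t *: (x0 + t^-1 *: (x - x0)).
  rewrite scalerDr scalerA divff ?gt_eqF // scale1r addrA -scalerDl subrK.
  by rewrite scale1r addrC subrK.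
apply: cS => //; first by rewrite ltW.
apply: Sz => j; rewrite !mxE.
have -> : x0 ord0 j + t^-1 * (x ord0 j - x0 ord0 j) - z ord0 j =
    t^-1 * (x ord0 j - (x0 ord0 j + t * (z ord0 j - x0 ord0 j))).
  by field; rewrite gt_eqF.
by rewrite normrM gtr0_norm ?invr_gt0 // ler_pdivrMl //; have := hx j; rewrite !mxE.
Qed.

Lemma cube_homothetic_sub n (x0 z x : 'rV[R]_n) D r t : 0 <= t -> cube x0 D z ->
  cube (x0 + t *: (z - x0)) (t * r) x -> cube x0 (t * (D + r)) x.
Proof.
move=> t0 x0z; rewrite mulrDr; apply: cube_trans => j.
by rewrite !mxE addrAC subrr add0r normrM ger0_norm // ler_wpM2l.
Qed.

End Cubes.

Section Sublevel.
Variable R : realType.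
Local Open Scope ereal_scope.

Lemma is_convex_sublevel n (v : 'rV[R]_n -> \bar R) (A : R) :
  conv_fun v -> is_convex [set y | v y <= A%:E].
Proof.
move=> cv x y t t01 vx vy /=; have /andP[t0 t1] := t01.
apply: (le_trans (cv x y t t01)).
have -> : A%:E = (1 - t)%:E * A%:E + t%:E * A%:E.
  by rewrite -!EFinM -EFinD; congr EFin; ring.
by apply: leeD; apply: lee_wpmul2l => //; rewrite lee_fin; lra.
Qed.

Lemma le_abse_fine (x : \bar R) : x < +oo -> x <= `|fine x|%:E.
Proof. by case: x => [r _| |] //=; rewrite ?lee_fin ?ler_norm ?leNye. Qed.

Lemma full_dim_sublevel_cube n (u : 'rV[R]_n -> \bar R) :
  conv_fun u -> full_dim_dom u ->
  exists A z rho, (0 < rho)%R /\ forall y, cube z rho y -> u y <= A%:E.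
Proof.
move=> cu [x0 [M [ux0 [uM rM]]]].
pose A : R := (`|fine (u x0)| + \sum_i `|fine (u (x0 + row i M)%R)|)%R.
have [|i|z [rho [rho0 Hz]]] :=
  is_convex_simplex_cube (is_convex_sublevel (A := A) cu) (x0 := x0) _ _ rM.
- apply: le_trans (le_abse_fine ux0) _.
  by rewrite lee_fin lerDl sumr_ge0.
- apply: le_trans (le_abse_fine (uM i)) _.
  rewrite lee_fin; apply: ler_wpDl => //.
  by apply: ler_sum_term => j.
by exists A, z, rho.
Qed.

End Sublevel.

Section IteratedIntegral.
Variable R : realType.
Local Open Scope ereal_scope.

Lemma integral_ge_itv (g : R -> \bar R) (a b K : R) :
  (forall t, 0 <= g t) -> (0 <= K)%R -> (a <= b)%R ->
  (forall t, (a <= t <= b)%R -> K%:E <= g t) ->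
  (K * (b - a))%:E <= \int[@lebesgue_measure R]_(t in setT) g t.
Proof.
move=> g0 K0 ab Kg; rewrite ge0_integralTE //.
have mab : measurable ([set` `[a, b]] : set (measurableTypeR R)).
  exact: measurable_itv.
pose h := scale_nnsfun (@indic_nnsfun _ (measurableTypeR R) R _ mab) K0.
apply: ereal_sup_ubound; exists h.
  move=> x /=; rewrite /measurable_realfun.mindic /= indicE.
  have [xab|xab] := boolP (x \in [set` `[a, b]]).
    by rewrite mulr1; apply: Kg; move: xab; rewrite inE /= in_itv.
  by rewrite mulr0 g0.
rewrite -integralT_nnsfun /= /measurable_realfun.mindic /=.
have := @integralZl_indic _ _ _ (@lebesgue_measure R) _ measurableT
  (fun=> [set` `[a, b]]) K.
move=> /(_ _ mab) /= ->; last by move=> K_lt0; exfalso; lra.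
rewrite integral_indic // setIT.
rewrite (_ : _ `[a, b]%classic = lebesgue_measure [set` `[a, b]]) //.
rewrite lebesgue_measure_itv /= lte_fin.
case: ltP => [_|ba]; first by rewrite -EFinD -EFinM.
have -> : b = a by apply/le_anti; rewrite ab ba.
by rewrite subrr mulr0 mule0.
Qed.

Lemma iint_ge0 n (f : 'rV[R]_n -> \bar R) : (forall x, 0 <= f x) -> 0 <= iint f.
Proof.
elim: n f => [|m IH] f f0 /=; first exact: f0.
by apply: integral_ge0 => t _; apply: IH.
Qed.

Lemma iint_ge_cube n (f : 'rV[R]_n -> \bar R) z (r c : R) :
  (0 <= r)%R -> (0 <= c)%R -> (forall x, 0 <= f x) ->
  (forall x, cube z r x -> c%:E <= f x) -> (c * (2 * r) ^+ n)%:E <= iint f.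
Proof.
elim: n f z => [|m IH] f z r0 c0 f0 cf /=.
  by rewrite expr0 mulr1; apply: cf => -[].
set a := (@lsubmx R 1 1 m z) ord0 ord0.
have -> : (c * (2 * r) ^+ m.+1 = c * (2 * r) ^+ m * (a + r - (a - r)))%R.
  by rewrite exprS; ring.
apply: integral_ge_itv => [t|||t ar].
- by apply: iint_ge0.
- by rewrite mulr_ge0 // exprn_ge0 // mulr_ge0.
- by lra.
apply: (IH _ (@rsubmx R 1 1 m z)) => // y zy; apply: cf.
rewrite -[z](@hsubmxK R 1 1 m); apply/cube_row_mx; split => //.
by rewrite mxE -/a ler_norml; lra.
Qed.

End IteratedIntegral.

Section DeltaLowerBound.
Variables (R : realType) (n : nat) (p : R) (zeta : R -> R).
Hypothesis p1 : 1 <= p.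
Local Notation zext := (zeta_ext zeta).

Lemma delta_ge_cube (v u : 'rV[R]_n -> \bar R) z (r g : R) : 0 < r -> 0 < g ->
  (forall x, cube z r x -> g <= `|zext (v x) - zext (u x)|) ->
  (((g `^ p * (2 * r) ^+ n) `^ p^-1)%:E <= delta zeta p v u)%E.
Proof.
move=> r0 g0 gvu; rewrite -poweR_EFin.
have p0 : 0 < p := lt_le_trans ltr01 p1.
apply: gt0_ler_poweR; first by rewrite invr_ge0 ltW.
- by rewrite in_itv /= leey lee_fin mulr_ge0 ?powR_ge0 // exprn_ge0 // mulr_ge0 // ltW.
- by rewrite in_itv /= leey andbT iint_ge0.
apply: iint_ge_cube => //; rewrite ?powR_ge0 ?ltW // => x zx.
by rewrite lee_fin ge0_ler_powR ?nnegrE ?(ltW g0) ?gvu // ltW.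
Qed.

Hypotheses (zeta_decr : forall s t, s < t -> zeta t < zeta s)
  (zeta_gt0 : forall t, 0 < zeta t).

Lemma zeta_ext_ge (a : \bar R) A : a != -oo%E -> (a <= A%:E)%E -> zeta A <= zext a.
Proof.
case: a => [a| |] //= _; rewrite lee_fin le_eqVlt => /predU1P[-> //|].
by move=> /zeta_decr/ltW.
Qed.

Lemma zeta_ext_le (b : \bar R) B : (B%:E < b)%E -> zext b <= zeta B.
Proof.
case: b => [b|_|//] /=; last exact: ltW.
by rewrite lte_fin => /zeta_decr/ltW.
Qed.

Lemma delta_lower_bound (u : 'rV[R]_n -> \bar R) x0 z (e r A C : R) :
  0 < e -> 0 < r -> (forall x, u x != -oo%E) ->
  (forall x, cube x0 e x -> u x = +oo%E) ->
  (forall x, cube z (3 * r) x -> (u x <= A%:E)%E) ->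
  exists2 eps : R, 0 < eps & forall v, conv_fun v ->
    (forall x, v x != -oo%E) -> (v x0 <= C%:E)%E -> (eps%:E <= delta zeta p v u)%E.
Proof.
move=> e0 r0 u_ninfty u_far u_low.
pose B := A + 1; pose C' := Num.max C B.
pose D : R := \sum_j `|z ord0 j - x0 ord0 j|.
have D0 : 0 <= D by rewrite sumr_ge0.
pose t := e / (e + D + r).
have t0 : 0 < t by apply: divr_gt0 => //; lra.
have t1 : t <= 1 by rewrite /t ler_pdivrMr ?mul1r; lra.
have tD : t * (D + r) <= e.
  rewrite /t mulrAC ler_pdivrMr; last lra.
  by rewrite ler_pM2l //; lra.
have eps_gt0 g s : 0 < g -> 0 < s -> 0 < (g `^ p * (2 * s) ^+ n) `^ p^-1.
  move=> g0 s0; apply/powR_gt0/mulr_gt0; first exact: powR_gt0.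
  exact/exprn_gt0/mulr_gt0.
have AB : 0 < zeta A - zeta B by rewrite subr_gt0 zeta_decr // ltrDl.
exists (Num.min ((((zeta A - zeta B) `^ p * (2 * r) ^+ n) `^ p^-1))
                ((zeta C' `^ p * (2 * (t * r)) ^+ n) `^ p^-1)).
  rewrite lt_min; apply/andP; split; apply: eps_gt0 => //.
  exact: mulr_gt0.
move=> v cv v_ninfty vx0.
have [[c zc cB]|zB] :=
  is_convex_cube_dichotomy z r0 (is_convex_sublevel (A := B) cv).
  apply: le_trans (delta_ge_cube (z := c) r0 AB _).
    by rewrite lee_fin ge_min lexx.
  move=> x cx; rewrite distrC; apply: le_trans (ler_norm _); apply: lerB.
    apply: zeta_ext_ge (u_ninfty x) (u_low x _).
    by rewrite (_ : 3 * r = 2 * r + r); [exact: cube_trans cx | ring].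
  by apply: zeta_ext_le; rewrite ltNge; apply/negP; exact: cB.
apply: le_trans
  (delta_ge_cube (z := x0 + t *: (z - x0)) (mulr_gt0 t0 r0) (zeta_gt0 C') _).
  by rewrite lee_fin ge_min lexx orbT.
move=> x hx; rewrite u_far /=; last first.
  apply: cube_le tD _.
  exact: cube_homothetic_sub (ltW t0) (cube_sum_dist x0 z) hx.
rewrite subr0; apply: le_trans (ler_norm _); apply: zeta_ext_ge (v_ninfty x) _.
apply: is_convex_homothetic_cube (is_convex_sublevel (A := C') cv) _ _ _ _ hx.
- by apply: le_trans vx0 _; rewrite lee_fin le_max lexx.
- by move=> y /zB /le_trans; apply; rewrite lee_fin le_max lexx orbT.
- by rewrite t0.
Qed.

End DeltaLowerBound.

Theorem lemma3p9 (R : realType) (n : nat) (p : R) (zeta : R -> R)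
    (u_ : nat -> 'rV[R]_n -> \bar R) (u : 'rV[R]_n -> \bar R) :
  1 <= p -> M_p n p zeta ->
  (forall k, Conv_coe (u_ k)) -> Conv_coe u ->
  (fun k => delta zeta p (u_ k) u) @ \oo --> 0%E ->
  forall x0 : 'rV[R]_n, interior (~` edom u) x0 ->
    (fun k => u_ k x0) @ \oo --> +oo%E.
Proof.
move=> p1 [_ zeta_decr zeta_gt0 _] uk_coe [[u_ninfty _] _ cu _ u_full] delta_cvg.
move=> x0 /interior_cube [e e0 x0_out].
have u_far x : cube x0 e x -> u x = +oo%E.
  by move=> /x0_out /negP; rewrite -leNgt leye_eq => /eqP.
have [A [z [rho [rho0 u_low]]]] := full_dim_sublevel_cube cu u_full.
have r0 : 0 < rho / 3 by rewrite divr_gt0.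
have u_low' x : cube z (3 * (rho / 3)) x -> (u x <= A%:E)%E.
  by rewrite mulrC divfK ?pnatr_eq0 //; exact: u_low.
apply/cvgeyPge => M.
have [eps eps0 delta_ge] :=
  delta_lower_bound p1 zeta_decr zeta_gt0 M e0 r0 u_ninfty u_far u_low'.
have delta_small : \forall k \near \oo, (delta zeta p (u_ k) u < eps%:E)%E.
  exact: delta_cvg (nbhs_open_ereal_lt (f := fun=> eps) eps0).
apply: filterS delta_small => k delta_lt; rewrite leNgt; apply/negP => ukM.
have [[uk_ninfty _] _ cuk _ _] := uk_coe k.
have := delta_ge _ cuk uk_ninfty (ltW ukM).
by rewrite leNgt delta_lt.
Qed.
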